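(* Let $\mathbf{A}\in\mathbb{R}^{n\times d}$, $\mathbf{B}\in\mathbb{R}^{n\times d_B}$, $\mathbf{C}\in\mathbb{R}^{n_C\times d}$, and let $k\in[d_B]$, $r\in[n_C]$. Then $$P_{k,r}(x;\mathbf{A},\mathbf{B},\mathbf{C})=x^{d-n}\,P_{r,k}(x;\mathbf{A}^{\rm T},\mathbf{C}^{\rm T},\mathbf{B}^{\rm T}).$$
   Context: For a matrix $\mathbf{M}$, $\mathbf{M}_{R,S}$ is the submatrix with rows $R$, columns $S$; $\mathbf{M}_{:,S}$, $\mathbf{M}_{R,:}$ keep all rows, resp. columns; $\mathbf{M}^\dagger$ is the Moore–Penrose pseudoinverse, $\mathbf{M}_{R,S}^\dagger:=(\mathbf{M}_{R,S})^\dagger$; empty determinants equal $1$ and $\mathbf{M}_{:,\emptyset}\mathbf{M}_{:,\emptyset}^\dagger$, $\mathbf{M}_{\emptyset,:}^\dagger\mathbf{M}_{\emptyset,:}$ are zero matrices. For general $\mathbf{A}\in\mathbb{R}^{n\times d}$, $\mathbf{B}\in\mathbb{R}^{n\times d_B}$, $\mathbf{C}\in\mathbb{R}^{n_C\times d}$, $S\subset[d_B]$, $R\subset[n_C]$: $\mathbf{Q}_S=\mathbf{I}_n-\mathbf{B}_{:,S}\mathbf{B}_{:,S}^\dagger$, $\mathbf{P}_R=\mathbf{I}_d-\mathbf{C}_{R,:}^\dagger\mathbf{C}_{R,:}$, $p_{S,R}(x;\mathbf{A},\mathbf{B},\mathbf{C})=\det[x\mathbf{I}_d-(\mathbf{Q}_S\mathbf{A}\mathbf{P}_R)^{\rm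 T}(\mathbf{Q}_S\mathbf{A}\mathbf{P}_R)]$, and $P_{k,r}(x;\mathbf{A},\mathbf{B},\mathbf{C})=\sum_{R\subset[n_C],|R|=r}\sum_{S\subset[d_B],|S|=k}\det[\mathbf{C}_{R,:}\mathbf{C}_{R,:}^{\rm T}]\det[\mathbf{B}_{:,S}^{\rm T}\mathbf{B}_{:,S}]\,p_{S,R}(x;\mathbf{A},\mathbf{B},\mathbf{C})$. (For $P_{r,k}(x;\mathbf{A}^{\rm T},\mathbf{C}^{\rm T},\mathbf{B}^{\rm T})$ the same definition is applied with the roles $\mathbf{A}\to\mathbf{A}^{\rm T}\in\mathbb{R}^{d\times n}$, $\mathbf{B}\to\mathbf{C}^{\rm T}$, $\mathbf{C}\to\mathbf{B}^{\rm T}$.) *)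

From Stdlib Require Import ClassicalEpsilon.
From HB Require Import structures.
From mathcomp Require Import all_boot all_order all_algebra.
Set Implicit Arguments. Unset Strict Implicit. Unset Printing Implicit Defensive.
Import Order.TTheory GRing.Theory Num.Theory.
Local Open Scope ring_scope.

Section Defs.
Variable R : realFieldType.

(* The four Penrose conditions (real case: transpose = adjoint). *)
Definition penrose m n (A : 'M[R]_(m, n)) (X : 'M[R]_(n, m)) : Prop :=
  [/\ A *m X *m A = A, X *m A *m X = X,
      (A *m X)^T = A *m X & (X *m A)^T = X *m A].

(* Moore–Penrose pseudoinverse: the (unique) matrix satisfying the
   Penrose conditions, selected by Hilbert's epsilon. *)
Definition pinv m n (A : 'M[R]_(m, n)) : 'M[R]_(n, m) :=
  epsilon (inhabits 0) (penrose A).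

(* B_{:,S}: columns of B indexed by S (in increasing order). *)
Definition colsS n dB (B : 'M[R]_(n, dB)) (S : {set 'I_dB}) : 'M[R]_(n, #|S|) :=
  colsub (fun j : 'I_#|S| => enum_val j) B.

(* C_{R,:}: rows of C indexed by Rs (in increasing order). *)
Definition rowsS nC d (C : 'M[R]_(nC, d)) (Rs : {set 'I_nC}) : 'M[R]_(#|Rs|, d) :=
  rowsub (fun i : 'I_#|Rs| => enum_val i) C.

Definition Qproj n dB (B : 'M[R]_(n, dB)) (S : {set 'I_dB}) : 'M[R]_n :=
  1%:M - colsS B S *m pinv (colsS B S).

Definition Pproj nC d (C : 'M[R]_(nC, d)) (Rs : {set 'I_nC}) : 'M[R]_d :=
  1%:M - pinv (rowsS C Rs) *m rowsS C Rs.

Definition pSR n d dB nC (A : 'M[R]_(n, d)) (B : 'M[R]_(n, dB)) (C : 'M[R]_(nC, d))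
  (S : {set 'I_dB}) (Rs : {set 'I_nC}) : {poly R} :=
  let M := Qproj B S *m A *m Pproj C Rs in char_poly (M^T *m M).

Definition Pkr n d dB nC (A : 'M[R]_(n, d)) (B : 'M[R]_(n, dB)) (C : 'M[R]_(nC, d))
  (k r : nat) : {poly R} :=
  \sum_(Rs : {set 'I_nC} | #|Rs| == r) \sum_(S : {set 'I_dB} | #|S| == k)
     (\det (rowsS C Rs *m (rowsS C Rs)^T) * \det ((colsS B S)^T *m colsS B S))
       *: pSR A B C S Rs.
End Defs.

From Stdlib Require Import ClassicalEpsilon.
From mathcomp Require Import all_boot all_order all_algebra.
Set Implicit Arguments. Unset Strict Implicit. Unset Printing Implicit Defensive.
Import GRing.Theory Num.Theory.
Local Open Scope ring_scope.

(* Since the Moore-Penrose inverse commutes with transposition, transposing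
   the projections gives [(Q_S(B))^T = P_S(B^T)] and [(P_R(C))^T = Q_R(C^T)].
   Hence for M := Q_S A P_R the (S, R) term of P_{k,r}(A, B, C) involves
   det(x - M^T M), while the (R, S) term of P_{r,k}(A^T, C^T, B^T) involves
   det(x - M M^T), with the same weight.  The two characteristic polynomials
   are related by x^n det(x - M^T M) = x^d det(x - M M^T). *)

Lemma char_poly_mulmxC (R : comNzRingType) n d
    (M : 'M[R]_(n, d)) (N : 'M[R]_(d, n)) :
  'X^n * char_poly (N *m M) = 'X^d * char_poly (M *m N).
Proof.
rewrite /char_poly /char_poly_mx !map_mxM.
set a := map_mx polyC M; set b := map_mx polyC N.
(* Both sides are computed from [det K] by Schur complements at either corner. *)
set K := block_mx ('X%:M : 'M_n) a b (1%:M : 'M_d).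
have elim_lower :
    block_mx 1%:M 0 (- b) 'X%:M *m K = block_mx 'X%:M a 0 ('X%:M - b *m a).
  rewrite /K mulmx_block !mul1mx !mul0mx !addr0 mulmx1 mulNmx.
  by rewrite mul_mx_scalar mul_scalar_mx addNr addrC mulNmx.
have elim_upper :
    K *m block_mx 1%:M 0 (- b) 1%:M = block_mx ('X%:M - a *m b) a 0 1%:M.
  by rewrite /K mulmx_block !mulmx1 !mulmx0 mulmxN !add0r mul1mx addrN.
move: (congr1 determinant elim_lower) (congr1 determinant elim_upper).
rewrite !det_mulmx !det_lblock !det_ublock !det_scalar !expr1n !mul1r !mulr1.
by move=> <- ->.
Qed.

Section Pseudoinverse.
Variable R : realFieldType.

Lemma penrose_unique m n (A : 'M[R]_(m, n)) X Y :
  penrose A X -> penrose A Y -> X = Y.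
Proof.
case=> [AXA XAX symAX symXA] [AYA YAY symAY symYA].
have AtE : A^T = A^T *m A *m Y by rewrite -{1}AYA trmx_mul symAY mulmxA.
have AtE' : A^T = X *m A *m A^T by rewrite -{1}AXA -mulmxA trmx_mul symXA.
have XE : X = X *m A *m Y.
  rewrite -{1}XAX -mulmxA -symAX trmx_mul mulmxA AtE !mulmxA.
  by rewrite -(mulmxA X) -trmx_mul symAX mulmxA XAX.
have YE : Y = X *m A *m Y.
  rewrite -{1}YAY -symYA trmx_mul AtE' -!mulmxA.
  by rewrite (mulmxA A^T) -trmx_mul symYA YAY.
by rewrite XE -YE.
Qed.

Lemma penrose_trmx m n (A : 'M[R]_(m, n)) X : penrose A X -> penrose A^T X^T.
Proof.
case=> AXA XAX symAX symXA; split.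
- by rewrite -!trmx_mul mulmxA AXA.
- by rewrite -!trmx_mul mulmxA XAX.
- by rewrite -trmx_mul symXA.
- by rewrite -trmx_mul symAX.
Qed.

Lemma mulmx_trmx_eq0 n (v : 'rV[R]_n) : v *m v^T = 0 -> v = 0.
Proof.
move=> /matrixP /(_ 0 0); rewrite !mxE.
under eq_bigr => j _ do rewrite mxE -expr2.
move=> /psumr_eq0P sq0; apply/rowP => j; rewrite mxE.
by apply/eqP; rewrite -sqrf_eq0; apply/eqP/sq0 => // i _; exact: sqr_ge0.
Qed.

Lemma row_free_gram_unitmx r n (G : 'M[R]_(r, n)) :
  row_free G -> G *m G^T \in unitmx.
Proof.
move=> freeG; rewrite -row_free_unit; apply: inj_row_free => v vGG0.
apply: (row_free_inj freeG); rewrite mul0mx; apply: mulmx_trmx_eq0.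
by rewrite trmx_mul mulmxA -(mulmxA v) vGG0 mul0mx.
Qed.

(* Greville's formula for a full-rank factorization [A = F G]. *)
Lemma penrose_mulmx m r n (F : 'M[R]_(m, r)) (G : 'M[R]_(r, n)) :
  G *m G^T \in unitmx -> F^T *m F \in unitmx ->
  penrose (F *m G) (G^T *m invmx (G *m G^T) *m invmx (F^T *m F) *m F^T).
Proof.
move=> unitG unitF.
set P := invmx (G *m G^T); set Q := invmx (F^T *m F).
have symP : P^T = P by rewrite /P trmx_inv trmx_mul trmxK.
have symQ : Q^T = Q by rewrite /Q trmx_inv trmx_mul trmxK.
have GP : G *m G^T *m P = 1%:M by rewrite /P mulmxV.
have QF : Q *m (F^T *m F) = 1%:M by rewrite /Q mulVmx.
have AX : F *m G *m (G^T *m P *m Q *m F^T) = F *m Q *m F^T.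
  by rewrite !mulmxA -(mulmxA F G) -(mulmxA F) GP mulmx1.
have XA : G^T *m P *m Q *m F^T *m (F *m G) = G^T *m P *m G.
  by rewrite -!mulmxA (mulmxA F^T) (mulmxA Q) QF mul1mx.
split.
- by rewrite AX -!mulmxA (mulmxA F^T) (mulmxA Q) QF mul1mx.
- by rewrite XA -!mulmxA (mulmxA G G^T) (mulmxA (G *m G^T)) GP mul1mx.
- by rewrite AX !trmx_mul trmxK symQ mulmxA.
- by rewrite XA !trmx_mul trmxK symP mulmxA.
Qed.

Lemma penrose_exists m n (A : 'M[R]_(m, n)) : exists X, penrose A X.
Proof.
have unitG := row_free_gram_unitmx (row_base_free A).
have freeF : row_free (col_base A)^T.
  by rewrite /row_free mxrank_tr; exact: col_base_full.
have := row_free_gram_unitmx freeF; rewrite trmxK => unitF.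
by eexists; rewrite -{1}(mulmx_base A); exact: penrose_mulmx.
Qed.

Lemma pinvP m n (A : 'M[R]_(m, n)) : penrose A (pinv A).
Proof. exact: epsilon_spec (penrose_exists A). Qed.

Lemma pinv_trmx m n (A : 'M[R]_(m, n)) : pinv A^T = (pinv A)^T.
Proof. exact: penrose_unique (pinvP _) (penrose_trmx (pinvP _)). Qed.

Lemma colsS_trmx nC d (C : 'M[R]_(nC, d)) Rs : colsS C^T Rs = (rowsS C Rs)^T.
Proof. by apply/matrixP => i j; rewrite !mxE. Qed.

Lemma rowsS_trmx n dB (B : 'M[R]_(n, dB)) S : rowsS B^T S = (colsS B S)^T.
Proof. by apply/matrixP => i j; rewrite !mxE. Qed.

Lemma Qproj_trmx nC d (C : 'M[R]_(nC, d)) Rs : Qproj C^T Rs = (Pproj C Rs)^T.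
Proof.
by rewrite /Qproj /Pproj colsS_trmx pinv_trmx -trmx_mul linearB /= trmx1.
Qed.

Lemma Pproj_trmx n dB (B : 'M[R]_(n, dB)) S : Pproj B^T S = (Qproj B S)^T.
Proof.
by rewrite /Qproj /Pproj rowsS_trmx pinv_trmx -trmx_mul linearB /= trmx1.
Qed.

Lemma pSR_trmx n d dB nC
    (A : 'M[R]_(n, d)) (B : 'M[R]_(n, dB)) (C : 'M[R]_(nC, d)) S Rs :
  'X^n * pSR A B C S Rs = 'X^d * pSR A^T C^T B^T Rs S.
Proof.
rewrite /pSR Qproj_trmx Pproj_trmx.
set M := Qproj B S *m A *m Pproj C Rs.
have -> : (Pproj C Rs)^T *m A^T *m (Qproj B S)^T = M^T.
  by rewrite !trmx_mul mulmxA.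
by rewrite trmxK char_poly_mulmxC.
Qed.

End Pseudoinverse.

Theorem proposition3p1 (R : realFieldType) (n d dB nC : nat)
  (A : 'M[R]_(n, d)) (B : 'M[R]_(n, dB)) (C : 'M[R]_(nC, d)) (k r : nat) :
  (1 <= k <= dB)%N -> (1 <= r <= nC)%N ->
  'X^n * Pkr A B C k r = 'X^d * Pkr A^T C^T B^T r k.
Proof.
move=> _ _; rewrite /Pkr exchange_big /= !mulr_sumr.
apply: eq_bigr => S _; rewrite !mulr_sumr; apply: eq_bigr => Rs _.
rewrite rowsS_trmx colsS_trmx !trmxK -!scalerAr [X in X *: _]mulrC.
by rewrite pSR_trmx.
Qed.
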